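(* Assume the standing setting, and let $e$ be an edge of type I. Then there exist partitions $(A_1,A_2)$ of $U$ and $(B_1,B_2)$ of $W$ such that $|B_1|=|A_1|+1$, $|A_2|=|B_2|+1$, $E_G(A_2)=\{e_1\}$, $E_G(B_1)=\{e_2\}$ and $E_G[A_1,B_2]=\{e\}$; moreover, for any such partitions, $B_1$ and $A_2$ are barriers of $G-e$.
   Context: Graphs may have multiple edges but no loops. An edge is admissible if it lies in some perfect matching; a connected graph with at least two vertices is matching covered if every edge is admissible; an edge $e$ of a matching covered graph $G$ is removable if $G-e$ is matching covered, and nonremovable otherwise. A brick is a 3-connected nonbipartite graph $G$ such that $G-x-y$ has a perfect matching for all distinct $x,y$. A nonbipartite matching covered graph $G$ is near-bipartite if it has a pair of edges $\{e_1,e_2\}$ (a removable doubleton) such that $G-\{e_1,e_2\}$ is bipartite matching covered. For a graph with a perfect matching, a nonempty vertex set $S$ is a barrier if the number of odd components of $G-S$ equals $|S|$. $E_G(X)$ is the set of edges with both ends in $X$, $E_G[X,Y]$ the set of edges with one end in $X$ and the other in $Y$. Standing setting: $G$ is a near-bipartite brick with removable doubleton $\{e_1,e_2\}$, $H=G-\{e_1,e_2\}$, and $(U,W)$ is the bipartition of $H$, labelled so that both ends of $e_1$ lie in $U$ and both ends of $e_2$ lie in $W$. A nonremovable edge $e\notin\{e_1,e_2\}$ of $G$ is of type I if $e$ is removable in $H$, and of type II if $e$ is nonremovable in $H$. *)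

(* A loopless multigraph is given by a finite vertex type V,
   a finite edge type E and endpoint maps src dst : E -> V (orientation is
   irrelevant).  Spanning subgraphs are described by their edge set F : {set E};
   the vertex set is always all of V unless a vertex set S is given. *)
From mathcomp Require Import all_boot.
Set Implicit Arguments. Unset Strict Implicit. Unset Printing Implicit Defensive.

Section Graphs.
Variables (V E : finType) (src dst : E -> V).

Definition loopless := forall f : E, src f != dst f.

Definition incident (f : E) (v : V) : bool := (src f == v) || (dst f == v).

Definition inside (S : {set V}) (f : E) : bool := (src f \in S) && (dst f \in S).

Definition adjIn (F : {set E}) (S : {set V}) : rel V := fun u v =>
  [&& u \in S, v \in S &
      [exists f in F, ((src f == u) && (dst f == v)) || ((src f == v) && (dst f == u))]].

Definition connected_on (F : {set E}) (S : {set V}) : Prop :=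
  forall u v, u \in S -> v \in S -> connect (adjIn F S) u v.

Definition perfect_matching_on (F : {set E}) (S : {set V}) (M : {set E}) : Prop :=
  M \subset F /\ (forall f, f \in M -> inside S f) /\
  (forall v, v \in S -> #|[set f in M | incident f v]| = 1).

Definition perfect_matching (F : {set E}) (M : {set E}) :=
  perfect_matching_on F [set: V] M.

Definition has_perfect_matching_on (F : {set E}) (S : {set V}) : Prop :=
  exists M, perfect_matching_on F S M.

Definition admissible (F : {set E}) (f : E) : Prop :=
  exists M, perfect_matching F M /\ f \in M.

Definition matching_covered (F : {set E}) : Prop :=
  connected_on F [set: V] /\ 2 <= #|V| /\ (forall f, f \in F -> admissible F f).

Definition removable (F : {set E}) (f : E) : Prop :=
  f \in F /\ matching_covered (F :\ f).

Definition nonremovable (F : {set E}) (f : E) : Prop :=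
  f \in F /\ ~ matching_covered (F :\ f).

Definition bipartite (F : {set E}) : Prop :=
  exists X : {set V}, forall f, f \in F -> (src f \in X) != (dst f \in X).

Definition three_connected (F : {set E}) : Prop :=
  4 <= #|V| /\ forall X : {set V}, #|X| <= 2 -> connected_on F (~: X).

Definition brick (F : {set E}) : Prop :=
  three_connected F /\ ~ bipartite F /\
  forall x y : V, x != y -> has_perfect_matching_on F (~: [set x; y]).

Definition removable_doubleton (F : {set E}) (e1 e2 : E) : Prop :=
  e1 \in F /\ e2 \in F /\ e1 != e2 /\
  bipartite (F :\: [set e1; e2]) /\ matching_covered (F :\: [set e1; e2]).

Definition edges_in (F : {set E}) (X : {set V}) : {set E} :=
  [set f in F | inside X f].

Definition edges_between (F : {set E}) (X Y : {set V}) : {set E} :=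
  [set f in F | ((src f \in X) && (dst f \in Y)) || ((src f \in Y) && (dst f \in X))].

Definition components_minus (F : {set E}) (S : {set V}) : {set {set V}} :=
  [set [set u | (u \in ~: S) && connect (adjIn F (~: S)) v u] | v in ~: S].

Definition odd_components (F : {set E}) (S : {set V}) : nat :=
  #|[set C in components_minus F S | odd #|C|]|.

Definition barrier (F : {set E}) (S : {set V}) : Prop :=
  (exists M, perfect_matching F M) /\ S != set0 /\ odd_components F S = #|S|.

End Graphs.

(* Since e is removable in H but not in G, every edge of G - e other than e1, e2 is admissible
   in G - e, so G - e has no perfect matching containing both e1 and e2.  Such a matching is the
   same as a perfect matching between A = U - V(e1) and B = W - V(e2) in H - e, so by Hall's
   theorem some X in A has |N(X)| < |X|.  A perfect matching M of the brick G through e1 also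
   contains e2 and matches A onto B; comparing M on X with N(X) gives |X| = |N(X)| + 1, the only
   edge of M leaving X outside N(X) being e.  Then A1 = X and B1 = N(X) + V(e2) work.
   Conversely, for any such partition the vertices of A1 are isolated in G - e - B1 while
   A2 + B2 is odd, so G - e - B1 has at least |A1| + 1 = |B1| odd components; since G - e has a
   perfect matching, B1 is a barrier, and symmetrically so is A2. *)

From mathcomp Require Import all_boot zify.
Set Implicit Arguments. Unset Strict Implicit. Unset Printing Implicit Defensive.

Section Hall.
Variable T : finType.
Implicit Types (r : rel T) (A N X Y Z : {set T}).

Lemma setUD_sub A X : X \subset A -> X :|: A :\: X = A.
Proof. by move=> sXA; rewrite -{2}(setID A X) (setIidPr sXA). Qed.

Lemma disjoint_setD A X : [disjoint X & A :\: X].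
Proof. by rewrite disjoint_sym disjoints_subset setDE subsetIr. Qed.

Definition neighbours r X : {set T} := [set y | [exists x in X, r x y]].

Definition hall_condition r A := forall X, X \subset A -> #|X| <= #|neighbours r X|.

Definition avoiding r N : rel T := fun x y => r x y && (y \notin N).

Lemma neighboursU r X Y : neighbours r (X :|: Y) = neighbours r X :|: neighbours r Y.
Proof.
apply/setP=> y; rewrite !inE; apply/existsP/orP.
  by case=> x /andP[]; rewrite inE => /orP[] xX rxy; [left|right];
    apply/existsP; exists x; rewrite xX.
by case=> /exists_inP[x xX rxy]; exists x; rewrite inE xX ?orbT.
Qed.

Lemma neighbours_avoiding r N X : neighbours (avoiding r N) X = neighbours r X :\: N.
Proof.
apply/setP=> y; rewrite !inE /avoiding.
case: (y \in N); last by apply: eq_existsb => x; rewrite andbT.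
by apply/exists_inP=> -[x _]; rewrite andbF.
Qed.

Lemma hall_condition_tight r A X : hall_condition r A -> X \subset A ->
  #|neighbours r X| <= #|X| -> hall_condition (avoiding r (neighbours r X)) (A :\: X).
Proof.
move=> hallA sXA tightX Z /subsetDP[sZA dZX].
have := hallA (Z :|: X); rewrite subUset sZA sXA => /(_ isT).
rewrite neighboursU neighbours_avoiding cardsU (disjoint_setI0 dZX) cards0 subn0.
have := cardsID (neighbours r X) (neighbours r Z).
rewrite cardsU; lia.
Qed.

Lemma hall_condition_surplus r A a b : a \in A ->
  (forall X, X \subset A -> X != set0 -> X != A -> #|X| < #|neighbours r X|) ->
  hall_condition (avoiding r [set b]) (A :\ a).
Proof.
move=> aA surplusA Z sZ; rewrite neighbours_avoiding.
have [-> | nZ0] := eqVneq Z set0; first by rewrite cards0.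
have sZA : Z \subset A := subset_trans sZ (subsetDl _ _).
have nZA : Z != A by apply: contraTneq sZ => ->; apply/subsetPn; exists a; rewrite ?inE ?eqxx.
have := surplusA Z sZA nZ0 nZA; have := cardsD1 b (neighbours r Z).
case: (b \in _); lia.
Qed.

Lemma glue_injective X Y N (f g : T -> T) :
  {in X &, injective f} -> {in Y &, injective g} ->
  {in X, forall x, f x \in N} -> {in Y, forall y, g y \notin N} ->
  {in X :|: Y &, injective (fun x => if x \in X then f x else g x)}.
Proof.
move=> injf injg fN gN x y; rewrite !inE.
case xX: (x \in X); case yX: (y \in X) => //= xY yY.
- exact: injf.
- by move=> fxgy; move: (gN y yY); rewrite -fxgy fN.
- by move=> gxfy; move: (gN x xY); rewrite gxfy fN.
- exact: injg.
Qed.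

(* Either a proper nonempty X is tight and A :\: X is matched avoiding N(X), or every such X
   has surplus and any single edge a b can be used first. *)
Theorem Hall_marriage r A : hall_condition r A ->
  exists f : T -> T, {in A &, injective f} /\ {in A, forall x, r x (f x)}.
Proof.
elim: {A}_.+1 {-2}A (ltnSn #|A|) r => // n IH A leAn r hallA.
have [A0 | [a aA]] := set_0Vmem A; first by exists id; split=> [x y|x]; rewrite A0 inE.
case: (boolP [exists X : {set T},
    [&& X \subset A, X != set0, X != A & #|neighbours r X| <= #|X|]]).
- case/existsP=> X /and4P[sXA nX0 nXA tightX].
  have ltXA : #|X| < #|A| by rewrite proper_card // properEneq nXA.
  have ltAX : #|A :\: X| < #|A| by rewrite cardsDS // -card_gt0 in nX0 *; lia.
  have [f [injf rf]] := IH X ltac:(lia) r (fun Z sZ => hallA Z (subset_trans sZ sXA)).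
  have [g [injg rg]] := IH (A :\: X) ltac:(lia) _ (hall_condition_tight hallA sXA tightX).
  exists (fun x => if x \in X then f x else g x); split.
    rewrite -(setUD_sub sXA).
    apply: (glue_injective (N := neighbours r X) injf injg) => x xX.
      by rewrite inE; apply/exists_inP; exists x; rewrite // rf.
    by case/andP: (rg x xX).
  move=> x xA; case: ifP => xX; first exact: rf.
  by have /andP[] := rg x ltac:(by rewrite inE xX xA).
- move=> noTight.
  have surplusA X : X \subset A -> X != set0 -> X != A -> #|X| < #|neighbours r X|.
    move=> sXA nX0 nXA; rewrite ltnNge; apply: contraNN noTight => tightX.
    by apply/existsP; exists X; rewrite sXA nX0 nXA.
  have [b] : exists b, b \in neighbours r [set a].
    by apply/set0Pn; rewrite -card_gt0; have := hallA [set a]; rewrite sub1set aA cards1; apply.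
  rewrite inE => /exists_inP[_ /set1P-> rab].
  have ltA : #|A :\ a| < #|A| by rewrite (cardsD1 a A) aA.
  have [g [injg rg]] := IH (A :\ a) ltac:(lia) _ (hall_condition_surplus b aA surplusA).
  exists (fun x => if x \in [set a] then b else g x); split.
    rewrite -(setD1K aA); apply: (glue_injective (N := [set b]) _ injg).
    - by move=> x y /set1P-> /set1P->.
    - by move=> x _; rewrite set11.
    - by move=> x xA; case/andP: (rg x xA).
  move=> x xA; case: set1P => [-> // | /eqP nxa].
  by have /andP[] := rg x ltac:(by rewrite !inE nxa xA).
Qed.

Lemma involution_closed_even (g : T -> T) A : involutive g -> (forall x, g x != x) ->
  {in A, forall x, g x \in A} -> ~~ odd #|A|.
Proof.
move=> gK g_neq; elim: {A}_.+1 {-2}A (ltnSn #|A|) => // n IH A leAn closedA.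
have [-> | [x xA]] := set_0Vmem A; first by rewrite cards0.
have sPA : [set x; g x] \subset A by rewrite subUset !sub1set xA closedA.
have closedAP : {in A :\: [set x; g x], forall y, g y \in A :\: [set x; g x]}.
  move=> y; rewrite !inE negb_or => /andP[/andP[nyx nygx] yA].
  rewrite closedA // andbT; apply/norP; split.
    by apply: contraNneq nygx => <-; rewrite gK.
  by apply: contraNneq nyx => /(can_inj gK)->.
have cardA : #|A| = #|A :\: [set x; g x]|.+2.
  have := subset_leq_card sPA; rewrite cardsDS // cards2 eq_sym g_neq; lia.
rewrite cardA !oddS negbK; apply: IH closedAP; lia.
Qed.

End Hall.

Section Matchings.
Variables (V E : finType) (src dst : E -> V).
Implicit Types (F M : {set E}) (S : {set V}) (f g h : E) (u v w : V).

Local Notation incident := (incident src dst).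
Local Notation perfect_matching_on := (perfect_matching_on src dst).
Local Notation perfect_matching := (perfect_matching src dst).

Definition ends f : {set V} := [set src f; dst f].

Definition joins f u w := ((src f == u) && (dst f == w)) || ((src f == w) && (dst f == u)).

Lemma incidentE f v : incident f v = (v \in ends f).
Proof. by rewrite /incident !inE eq_sym (eq_sym (dst f)). Qed.

Lemma joinsC f u w : joins f u w = joins f w u.
Proof. by rewrite /joins orbC. Qed.

Lemma joinsP f u w : joins f u w -> (src f = u /\ dst f = w) \/ (src f = w /\ dst f = u).
Proof. by case/orP=> /andP[/eqP-> /eqP->]; [left | right]. Qed.

Lemma joins_incident f u w : joins f u w -> incident f u.
Proof. by rewrite incidentE !inE => /joinsP[[-> _] | [_ ->]]; rewrite eqxx ?orbT. Qed.

Lemma perfect_matching_on_cover F S M v : perfect_matching_on F S M -> v \in S ->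
  exists2 f, f \in M & incident f v.
Proof.
case=> _ [_ cardM] vS; have /eqP/cards1P[f defM] := cardM v vS.
by have := set11 f; rewrite -defM inE => /andP[]; exists f.
Qed.

Lemma perfect_matching_on_unique F S M v f g : perfect_matching_on F S M -> v \in S ->
  f \in M -> g \in M -> incident f v -> incident g v -> f = g.
Proof.
case=> _ [_ cardM] vS fM gM fv gv; have /eqP/cards1P[h defM] := cardM v vS.
have: f \in [set h] by rewrite -defM inE fM fv.
have: g \in [set h] by rewrite -defM inE gM gv.
by rewrite !inE => /eqP-> /eqP->.
Qed.

Lemma perfect_matchingP F M : M \subset F -> (forall v, exists2 f, f \in M & incident f v) ->
  (forall v f g, f \in M -> g \in M -> incident f v -> incident g v -> f = g) ->
  perfect_matching F M.
Proof.
move=> sMF coverM uniqM; split=> //; split=> [f _ | v _]; first by rewrite /inside !inE.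
have [f fM fv] := coverM v; apply/eqP/cards1P; exists f; apply/setP=> g; rewrite !inE.
by apply/andP/eqP=> [[gM gv] | ->]; [apply: uniqM gv fv | rewrite fM fv].
Qed.

Lemma perfect_matching_subset F1 F2 M : F1 \subset F2 ->
  perfect_matching F1 M -> perfect_matching F2 M.
Proof. by move=> sF [sMF1 pmM]; split=> //; apply: subset_trans sF. Qed.

Lemma perfect_matching_add F M f : f \in F ->
  perfect_matching_on F (~: ends f) M -> perfect_matching F (f |: M).
Proof.
move=> fF pmM; have [sMF [insideM _]] := pmM.
have avoid_f g v : g \in M -> incident g v -> v \notin ends f.
  move=> gM; rewrite incidentE !inE => /orP[]/eqP->;
  by have /andP[] := insideM g gM; rewrite !inE.
apply: perfect_matchingP => [|v|v g h].
- by rewrite subUset sub1set fF sMF.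
- have [vf | nvf] := boolP (v \in ends f); first by exists f; rewrite ?setU11 ?incidentE.
  have [g gM gv] := perfect_matching_on_cover pmM (v := v) ltac:(by rewrite inE).
  by exists g; rewrite // setU1r.
rewrite !inE => /orP[/eqP-> | gM] /orP[/eqP-> | hM] gv hv //.
- by move: (avoid_f _ _ hM hv); rewrite -incidentE gv.
- by move: (avoid_f _ _ gM gv); rewrite -incidentE hv.
- have vS : v \in ~: ends f by rewrite inE (avoid_f _ _ gM gv).
  exact: perfect_matching_on_unique pmM vS gM hM gv hv.
Qed.

Lemma card_ends f : loopless src dst -> #|ends f| = 2.
Proof. by move=> loopless_G; rewrite cards2 loopless_G. Qed.

Lemma ends_sub_edges_in F Y f : edges_in src dst F Y = [set f] -> ends f \subset Y.
Proof.
move=> defY; have := set11 f; rewrite -defY inE /inside => /andP[_ /andP[sY dY]].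
by rewrite subUset !sub1set sY dY.
Qed.

Lemma edges_betweenC F X Y : edges_between src dst F X Y = edges_between src dst F Y X.
Proof. by apply/setP=> f; rewrite !inE orbC. Qed.

Lemma connected_on_subset F1 F2 S : F1 \subset F2 ->
  connected_on src dst F1 S -> connected_on src dst F2 S.
Proof.
move=> sF conn u v uS vS; apply: connect_sub (conn u v uS vS) => x y.
case/and3P=> xS yS /exists_inP[f fF J]; apply: connect1.
by rewrite /adjIn xS yS; apply/exists_inP; exists f; rewrite ?(subsetP sF).
Qed.

Lemma matching_covered_perfect_matching F :
  matching_covered src dst F -> exists M, perfect_matching F M.
Proof.
case=> conn [/card_gt1P[u [v [_ _ nuv]]] admF].
have /connectP[[|x p] /=] := conn u v (in_setT u) (in_setT v).
  by move=> _ uv; rewrite uv eqxx in nuv.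
case/andP=> /and3P[_ _ /exists_inP[f fF _]] _ _.
by have [M [pmM _]] := admF f fF; exists M.
Qed.

Section Mate.
Hypothesis loopless_G : loopless src dst.
Variables (F M : {set E}) (e0 : E).
Hypothesis pmM : perfect_matching F M.

Definition matched_edge v := odflt e0 [pick f in M | incident f v].

Definition mate v :=
  if src (matched_edge v) == v then dst (matched_edge v) else src (matched_edge v).

Lemma matched_edgeP v : matched_edge v \in M /\ incident (matched_edge v) v.
Proof.
have [f fM fv] := perfect_matching_on_cover pmM (in_setT v).
by rewrite /matched_edge; case: pickP => [g /andP[] | /(_ f)] //=; rewrite fM fv.
Qed.

Lemma matched_edge_in_F v : matched_edge v \in F.
Proof. by have [sMF _] := pmM; apply: (subsetP sMF); case: (matched_edgeP v). Qed.

Lemma matched_edge_unique v f : f \in M -> incident f v -> f = matched_edge v.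
Proof.
have [mM mv] := matched_edgeP v.
by move=> fM fv; apply: perfect_matching_on_unique pmM (in_setT v) fM mM fv mv.
Qed.

Lemma matched_edge_ends v f : f \in M -> v \in ends f -> matched_edge v = f.
Proof. by move=> fM vf; symmetry; apply: matched_edge_unique fM _; rewrite incidentE. Qed.

Lemma mate_joins v : joins (matched_edge v) v (mate v).
Proof.
have [_] := matched_edgeP v; rewrite /incident /mate /joins.
by case: (src _ =P v) => [-> | _] /= => [|->]; rewrite !eqxx.
Qed.

Lemma matched_edge_mate v : matched_edge (mate v) = matched_edge v.
Proof.
have [mM _] := matched_edgeP v; have J := mate_joins v; rewrite joinsC in J.
by symmetry; apply: matched_edge_unique mM (joins_incident J).
Qed.

Lemma mate_neq v : mate v != v.
Proof.
have := loopless_G (matched_edge v).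
by case/joinsP: (mate_joins v) => -[-> ->] //; rewrite eq_sym.
Qed.

Lemma mateK : involutive mate.
Proof.
move=> v; rewrite {1}/mate matched_edge_mate.
have := mate_neq v; case/joinsP: (mate_joins v) => -[-> ->]; last by rewrite eqxx.
by rewrite eq_sym => /negbTE->.
Qed.

Lemma same_matched_edge u v : matched_edge u = matched_edge v -> v = u \/ v = mate u.
Proof.
have [_] := matched_edgeP v; rewrite incidentE => + uv; rewrite -uv !inE.
by case/joinsP: (mate_joins u) => -[-> ->] /orP[]/eqP; auto.
Qed.

End Mate.
End Matchings.

Section OddComponents.
Variables (V E : finType) (src dst : E -> V).
Hypothesis loopless_G : loopless src dst.
Variables (F : {set E}) (S : {set V}).

Implicit Types (X Y : {set V}).

Local Notation adj := (adjIn src dst F (~: S)).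

Definition component v : {set V} := [set u | (u \in ~: S) && connect adj v u].

Lemma adj_sym : symmetric adj.
Proof.
move=> x y; rewrite /adjIn andbCA; congr (_ && (_ && _)).
by apply: eq_existsb => f; rewrite orbC.
Qed.

Lemma adj_outside x y : adj x y -> (x \in ~: S) && (y \in ~: S).
Proof. by case/and3P=> -> ->. Qed.

Lemma mem_component v : v \in ~: S -> v \in component v.
Proof. by move=> vS; rewrite inE vS connect0. Qed.

Lemma component_eq u v : u \in component v -> component u = component v.
Proof.
rewrite inE => /andP[_ vu]; apply/setP=> w; rewrite !inE; congr (_ && _).
have uv : connect adj u v by rewrite (sym_connect_sym adj_sym).
by apply/idP/idP; apply: connect_trans.
Qed.

Lemma componentsP C :
  reflect (exists2 v, v \in ~: S & C = component v) (C \in components_minus src dst F S).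
Proof. exact: (iffP imsetP). Qed.

Lemma component_closed v : closed adj (mem (component v)).
Proof.
move=> x y xy; have /andP[xS yS] := adj_outside xy.
rewrite !inE; move: xS yS; rewrite !inE => -> -> /=.
by apply/idP/idP=> vx; apply: connect_trans vx _; rewrite connect1 // adj_sym.
Qed.

Section UpperBound.
Variables (M : {set E}) (e0 : E).
Hypothesis pmM : perfect_matching src dst F M.

Local Notation mate := (mate src dst M e0).

Lemma odd_component_matched_into v : v \in ~: S -> odd #|component v| ->
  exists2 s, s \in S & mate s \in component v.
Proof.
move=> vS oddC; apply/exists_inP; apply: contraTT oddC => noS.
(* otherwise mate is a fixed-point-free involution of the component *)
apply: (involution_closed_even (mateK loopless_G e0 pmM) (mate_neq loopless_G e0 pmM)).
move=> u uC; have uS : u \in ~: S by case/setIdP: uC.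
have mS : mate u \in ~: S.
  rewrite inE; apply: contraNN noS => mS; apply/exists_inP; exists (mate u) => //.
  by rewrite (mateK loopless_G e0 pmM).
suff uv : adj u (mate u) by rewrite -(component_closed v uv).
rewrite /adjIn uS mS; apply/exists_inP; exists (matched_edge src dst M e0 u).
  exact: matched_edge_in_F pmM u.
exact: (mate_joins e0 pmM u).
Qed.

Lemma odd_components_le : odd_components src dst F S <= #|S|.
Proof.
pose O := [set C in components_minus src dst F S | odd #|C|].
pose phi (C : {set V}) := odflt (src e0) [pick s in S | mate s \in C].
have phiP C : C \in O -> phi C \in S /\ mate (phi C) \in C.
  rewrite inE => /andP[/componentsP[v vS ->] oddC].
  have [s sS sC] := odd_component_matched_into vS oddC.
  by rewrite /phi; case: pickP => [t /andP[] | /(_ s)] //=; rewrite sS sC.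
have phi_inj : {in O &, injective phi}.
  move=> C D CO DO phiCD; have [_ mC] := phiP C CO; have [_ mD] := phiP D DO.
  move: CO DO mC mD; rewrite !inE phiCD => /andP[/componentsP[v _ ->] _].
  by case/andP=> /componentsP[w _ ->] _ /component_eq <- /component_eq ->.
rewrite /odd_components -/O -(card_in_imset phi_inj); apply: subset_leq_card.
by apply/subsetP=> s /imsetP[C CO ->]; case: (phiP C CO).
Qed.

End UpperBound.

Lemma odd_closed_has_odd_component Y : Y \subset ~: S -> closed adj (mem Y) -> odd #|Y| ->
  exists2 v, v \in Y & odd #|component v|.
Proof.
elim: {Y}_.+1 {-2}Y (ltnSn #|Y|) => // n IH Y leYn sYS closedY oddY.
have [Y0 | [v vY]] := set_0Vmem Y; first by rewrite Y0 cards0 in oddY.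
have [oddC | evenC] := boolP (odd #|component v|); first by exists v.
have sCY : component v \subset Y.
  by apply/subsetP=> u /setIdP[_ vu]; rewrite -(closed_connect closedY vu).
have vC : v \in component v := mem_component (subsetP sYS v vY).
have [||||u /setDP[uY _] oddu] := IH (Y :\: component v); last by exists u.
- rewrite cardsDS //; have := subset_leq_card sCY.
  have : 0 < #|component v| by rewrite card_gt0; apply/set0Pn; exists v.
  lia.
- exact: subset_trans (subsetDl _ _) sYS.
- by move=> x y xy; rewrite !in_setD (closedY x y xy) (component_closed v xy).
- by rewrite cardsDS // oddB ?subset_leq_card // oddY (negbTE evenC).
Qed.

Lemma odd_components_ge X Y : X :|: Y = ~: S -> [disjoint X & Y] ->
  {in X, forall x u, ~~ adj x u} -> odd #|Y| -> #|X| + 1 <= odd_components src dst F S.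
Proof.
move=> defXY dXY isoX oddY.
have sYS : Y \subset ~: S by rewrite -defXY subsetUr.
have closedY : closed adj (mem Y).
  have inY z : z \in ~: S -> z \notin X -> z \in Y by rewrite -defXY inE => /orP[->|].
  move=> x y xy; have /andP[xS yS] := adj_outside xy.
  have xX : x \notin X by apply: contraTN xy => /isoX.
  have yX : y \notin X by rewrite adj_sym in xy; apply: contraTN xy => /isoX.
  by change ((x \in Y) = (y \in Y)); rewrite (inY x) ?(inY y).
have [v vY oddv] := odd_closed_has_odd_component sYS closedY oddY.
have componentX x : x \in X -> component x = [set x].
  move=> xX; apply/setP=> u; rewrite !inE.
  apply/andP/eqP=> [[_ /connectP[[_ -> // | y p /= /andP[xy _]]]] | ->].
    by move: (isoX x xX y); rewrite xy.
  by split; [rewrite -in_setC -defXY inE xX | apply: connect0].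
have vS : v \in ~: S := subsetP sYS v vY.
have sub : component v |: (set1 @: X) \subset [set C in components_minus src dst F S | odd #|C|].
  apply/subsetP=> C; rewrite !inE => /orP[/eqP-> | /imsetP[x xX ->]].
    by rewrite oddv andbT; apply/componentsP; exists v.
  rewrite cards1 andbT; apply/componentsP; exists x; last by rewrite componentX.
  by rewrite -defXY inE xX.
have vX : component v \notin set1 @: X.
  apply/imsetP=> -[x xX Cx]; have := mem_component vS; rewrite Cx inE => /eqP vx.
  by move: (disjointFr dXY xX); rewrite -vx vY.
by have := subset_leq_card sub; rewrite cardsU1 vX card_imset //; [rewrite addnC | apply: set1_inj].
Qed.

Lemma barrier_of_isolated M X Y : perfect_matching src dst F M ->
  X :|: Y = ~: S -> [disjoint X & Y] -> {in X, forall x u, ~~ adj x u} -> odd #|Y| ->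
  #|S| = #|X| + 1 -> barrier src dst F S.
Proof.
move=> pmM defXY dXY isoX oddY cardS.
have [s sS] : exists s, s \in S by apply/set0Pn; rewrite -card_gt0 cardS addn1.
have [e0 _ _] := perfect_matching_on_cover pmM (in_setT s).
split; first by exists M.
split; first by apply/set0Pn; exists s.
apply/eqP; rewrite eqn_leq (odd_components_le e0 pmM) cardS.
exact: odd_components_ge defXY dXY isoX oddY.
Qed.

End OddComponents.

Section Doubleton.
Variables (V E : finType) (src dst : E -> V).
Variables (F : {set E}) (e1 e2 : E) (U W : {set V}).
Hypothesis defW : W = ~: U.
Hypothesis H_crosses : {in F :\: [set e1; e2], forall f, (src f \in U) != (dst f \in U)}.

Lemma memW v : (v \in W) = (v \notin U).
Proof. by rewrite defW inE. Qed.

Lemma joins_crosses f u w : f \in F -> f != e1 -> f != e2 -> joins src dst f u w ->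
  (u \in U) != (w \in U).
Proof.
move=> fF n1 n2 J; have /H_crosses : f \in F :\: [set e1; e2] by rewrite !inE negb_or n1 n2 fF.
by case/joinsP: J => -[-> ->]; rewrite // eq_sym.
Qed.

Lemma crosses_swap : {in F :\: [set e2; e1], forall f, (src f \in W) != (dst f \in W)}.
Proof.
move=> f; rewrite [[set e2; e1]]setUC !memW => /H_crosses.
by case: (src f \in U); case: (dst f \in U).
Qed.

Lemma edges_in_side (Y : {set V}) : e1 \in F -> ends src dst e1 \subset Y -> Y \subset U ->
  ends src dst e2 \subset W -> edges_in src dst F Y = [set e1].
Proof.
move=> e1F se1Y sYU se2W; apply/setP=> f; rewrite !inE /inside.
apply/idP/eqP=> [/and3P[fF sfY dfY] | ->]; last first.
  by rewrite e1F -!sub1set -subUset (subset_trans _ se1Y).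
have sfU := subsetP sYU _ sfY; have dfU := subsetP sYU _ dfY.
have [// | n1] := eqVneq f e1.
have n2 : f != e2.
  by apply: contraTneq sfU => ->; rewrite -memW (subsetP se2W) // !inE eqxx.
have /H_crosses : f \in F :\: [set e1; e2] by rewrite !inE negb_or n1 n2 fF.
by rewrite sfU dfU.
Qed.

End Doubleton.

Section Barriers.
Variables (V E : finType) (src dst : E -> V).
Variables (F : {set E}) (e1 e2 e : E) (U W A1 A2 B1 B2 : {set V}).
Hypothesis loopless_G : loopless src dst.
Hypothesis defW : W = ~: U.
Hypothesis H_crosses : {in F :\: [set e1; e2], forall f, (src f \in U) != (dst f \in U)}.
Hypotheses (defU : A1 :|: A2 = U) (dA : [disjoint A1 & A2]).
Hypotheses (defW12 : B1 :|: B2 = W) (dB : [disjoint B1 & B2]).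
Hypotheses (cardB1 : #|B1| = #|A1| + 1) (cardA2 : #|A2| = #|B2| + 1).
Hypotheses (inA2 : edges_in src dst F A2 = [set e1]) (inB1 : edges_in src dst F B1 = [set e2]).
Hypothesis betweenA1B2 : edges_between src dst F A1 B2 = [set e].

Lemma sides v : [/\ (v \in A1) || (v \in A2) = (v \in U), (v \in B1) || (v \in B2) = (v \notin U),
  ~~ ((v \in A1) && (v \in A2)) & ~~ ((v \in B1) && (v \in B2))].
Proof.
split; first by rewrite -defU inE.
- by rewrite -(memW defW) -defW12 inE.
- by apply/andP=> -[vA1]; rewrite (disjointFr dA vA1).
- by apply/andP=> -[vB1]; rewrite (disjointFr dB vB1).
Qed.

Ltac side_cases v := case: (sides v);
  case: (v \in A1); case: (v \in A2); case: (v \in B1); case: (v \in B2); case: (v \in U).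

Lemma A1_isolated : {in A1, forall x u, ~~ adjIn src dst (F :\ e) (~: B1) x u}.
Proof.
move=> x xA1 u; apply/negP=> /and3P[_ uB1 /exists_inP[f /setD1P[nfe fF] J]].
have xf : x \in ends src dst f by rewrite -incidentE (joins_incident J).
have [fe1 | n1] := eqVneq f e1.
  by move: xf xA1; rewrite fe1 => /(subsetP (ends_sub_edges_in inA2)); side_cases x.
have [fe2 | n2] := eqVneq f e2.
  by move: xf xA1; rewrite fe2 => /(subsetP (ends_sub_edges_in inB1)); side_cases x.
have cross := joins_crosses H_crosses fF n1 n2 J.
have uB2 : u \in B2 by move: xA1 uB1 cross; rewrite inE; side_cases x; side_cases u.
move/eqP: nfe; apply; apply/set1P; rewrite -betweenA1B2 inE fF.
by case/joinsP: J => -[-> ->]; rewrite xA1 uB2 ?orbT.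
Qed.

Lemma B1_barrier M : perfect_matching src dst (F :\ e) M -> barrier src dst (F :\ e) B1.
Proof.
move=> pmM; apply: (barrier_of_isolated loopless_G pmM (X := A1) (Y := A2 :|: B2)) => //.
- by apply/setP=> v; rewrite !inE; side_cases v.
- by rewrite -setI_eq0; apply/eqP/setP=> v; rewrite !inE; side_cases v.
- exact: A1_isolated.
- have dAB : [disjoint A2 & B2].
    by rewrite -setI_eq0; apply/eqP/setP=> v; rewrite !inE; side_cases v.
  by rewrite cardsU (disjoint_setI0 dAB) cards0 subn0 cardA2 addnAC addnn oddD odd_double.
Qed.

End Barriers.

Lemma barriers_of_partition (V E : finType) (src dst : E -> V) (F : {set E}) (e1 e2 e : E)
    (U W A1 A2 B1 B2 : {set V}) (M : {set E}) :
  loopless src dst -> W = ~: U ->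
  {in F :\: [set e1; e2], forall f, (src f \in U) != (dst f \in U)} ->
  A1 :|: A2 = U -> [disjoint A1 & A2] -> B1 :|: B2 = W -> [disjoint B1 & B2] ->
  #|B1| = #|A1| + 1 -> #|A2| = #|B2| + 1 ->
  edges_in src dst F A2 = [set e1] -> edges_in src dst F B1 = [set e2] ->
  edges_between src dst F A1 B2 = [set e] ->
  perfect_matching src dst (F :\ e) M ->
  barrier src dst (F :\ e) B1 /\ barrier src dst (F :\ e) A2.
Proof.
move=> loopless_G defW H_crosses defU dA defW12 dB cardB1 cardA2 inA2 inB1 betweenA1B2 pmM.
split; first exact: (B1_barrier loopless_G defW H_crosses defU dA defW12 dB cardB1 cardA2
  inA2 inB1 betweenA1B2 pmM).
(* the hypotheses are invariant under swapping (U, A1, A2, e1) with (W, B2, B1, e2) *)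
have defU' : U = ~: W by rewrite defW setCK.
have defW' : B2 :|: B1 = W by rewrite setUC.
have defU'' : A2 :|: A1 = U by rewrite setUC.
rewrite disjoint_sym in dA; rewrite disjoint_sym in dB; rewrite edges_betweenC in betweenA1B2.
exact: (B1_barrier loopless_G defU' (crosses_swap defW H_crosses) defW' dB defU'' dA
  cardA2 cardB1 inB1 inA2 betweenA1B2 pmM).
Qed.

Section Existence.
Variables (V E : finType) (src dst : E -> V).
Variables (F : {set E}) (e1 e2 e : E) (U W : {set V}).
Hypothesis loopless_G : loopless src dst.
Hypothesis brick_G : brick src dst F.
Hypothesis doubleton : removable_doubleton src dst F e1 e2.
Hypothesis defW : W = ~: U.
Hypothesis H_crosses : {in F :\: [set e1; e2], forall f, (src f \in U) != (dst f \in U)}.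
Hypotheses (e1_in_U : ends src dst e1 \subset U) (e2_in_W : ends src dst e2 \subset W).
Hypothesis e_neq_e12 : e \notin [set e1; e2].
Hypothesis e_nonremovable : nonremovable src dst F e.
Hypothesis e_removable_H : removable src dst (F :\: [set e1; e2]) e.

Local Notation H := (F :\: [set e1; e2]).
Local Notation ends := (ends src dst).
Local Notation joins := (joins src dst).
Local Notation perfect_matching := (perfect_matching src dst).

Lemma e1_in_F : e1 \in F. Proof. by case: doubleton. Qed.
Lemma e2_in_F : e2 \in F. Proof. by case: doubleton => _ []. Qed.

Lemma e12_in_F_minus_e f : f \in [set e1; e2] -> f \in F :\ e.
Proof.
move=> fe12; rewrite !inE (contraNneq _ e_neq_e12) => [|<- //].
by case/set2P: fe12 => ->; [apply: e1_in_F | apply: e2_in_F].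
Qed.

Lemma notin_ends_e1 v : v \notin U -> v \notin ends e1.
Proof. by apply: contra => /(subsetP e1_in_U). Qed.

Lemma notin_ends_e2 v : v \in U -> v \notin ends e2.
Proof. by apply: contraL => /(subsetP e2_in_W); rewrite (memW defW). Qed.

Lemma card_U_W : #|U| = #|W|.
Proof.
have [M pmM] := matching_covered_perfect_matching (proj2 e_removable_H).
pose mate := mate src dst M e.
have mate_side v : (mate v \in U) = (v \notin U).
  have /setD1P[_ fH] := matched_edge_in_F e pmM v.
  by case/joinsP: (mate_joins e pmM v) (H_crosses fH) => -[-> ->];
    case: (v \in U); case: (mate v \in U).
have mate_inj : injective mate := can_inj (mateK loopless_G e pmM).
apply/eqP; rewrite eqn_leq; apply/andP; split;
  rewrite -(card_imset _ mate_inj); apply: subset_leq_card;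
  apply/subsetP=> _ /imsetP[v vUW ->]; rewrite ?(memW defW) mate_side.
- by rewrite negbK.
- by rewrite -(memW defW).
Qed.

Lemma no_perfect_matching_through_e1_e2 M :
  perfect_matching (F :\ e) M -> e1 \in M -> e2 \in M -> False.
Proof.
move=> pmM e1M e2M; case: e_nonremovable => _; apply.
have sHF : H :\ e \subset F :\ e by apply: setSD; apply: subsetDl.
have [connH [cardV admH]] := e_removable_H.2.
split; first exact: connected_on_subset sHF connH.
split=> // f /setD1P[nfe fF].
have [fe12 | nfe12] := boolP (f \in [set e1; e2]).
  by case/set2P: fe12 => ->; exists M.
have fH : f \in H :\ e by move: nfe12; rewrite !inE nfe fF andbT => ->.
have [M' [pmM' fM']] := admH f fH.
by exists M'; split=> //; apply: perfect_matching_subset sHF pmM'.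
Qed.

Lemma perfect_matching_through_e1 : exists2 M, perfect_matching F M & e1 \in M.
Proof.
have [_ [_ hasPM]] := brick_G.
have [N pmN] := hasPM _ _ (loopless_G e1).
by exists (e1 |: N); [apply: perfect_matching_add e1_in_F pmN | apply: setU11].
Qed.

(* Perfect matchings of G - e through e1 and e2 are perfect matchings of R between A and B. *)
Let A := U :\: ends e1.
Let B := W :\: ends e2.
Let R : rel V := fun u w => (w \in B) && [exists f in F :\ e, joins f u w].

Lemma card_A : #|A| + 2 = #|U|.
Proof. by rewrite cardsDS // (card_ends _ loopless_G); have := subset_leq_card e1_in_U;
  rewrite (card_ends _ loopless_G); lia. Qed.

Lemma card_B : #|B| + 2 = #|W|.
Proof. by rewrite cardsDS // (card_ends _ loopless_G); have := subset_leq_card e2_in_W;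
  rewrite (card_ends _ loopless_G); lia. Qed.

Section HallMatching.
Variable g : V -> V.
Hypotheses (g_inj : {in A &, injective g}) (g_R : {in A, forall u, R u (g u)}).

Let hall_edge u := odflt e [pick f in F :\ e | joins f u (g u)].

Lemma hall_edgeP u : u \in A -> hall_edge u \in F :\ e /\ joins (hall_edge u) u (g u).
Proof.
move=> uA; have /andP[_ /exists_inP[f fF J]] := g_R uA.
by rewrite /hall_edge; case: pickP => [h /andP[] | /(_ f)] //=; rewrite fF J.
Qed.

Lemma image_g : g @: A = B.
Proof.
apply/eqP; rewrite eqEcard card_in_imset //.
have -> : #|A| = #|B| by have := card_A; have := card_B; rewrite card_U_W; lia.
by rewrite leqnn andbT; apply/subsetP=> _ /imsetP[u uA ->]; case/andP: (g_R uA).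
Qed.

Let M := hall_edge @: A :|: [set e1; e2].

Lemma hall_matching_incident f v : f \in M -> v \in ends f ->
  if v \in ends e1 then f = e1 else if v \in ends e2 then f = e2
  else exists2 u, u \in A & f = hall_edge u /\ (v = u \/ v = g u).
Proof.
case/setUP=> [/imsetP[u uA ->] | /set2P[] ->] vf.
- have /setDP[uU ue1] := uA; have /andP[/setDP[gW ge2] _] := g_R uA.
  have gU : g u \notin U by rewrite -(memW defW).
  have [-> | ->] : v = u \/ v = g u.
    by move: vf; rewrite !inE; case/joinsP: (hall_edgeP uA).2 => -[-> ->] /orP[]/eqP; auto.
  + by rewrite (negbTE ue1) (negbTE (notin_ends_e2 uU)); exists u; auto.
  + by rewrite (negbTE (notin_ends_e1 gU)) (negbTE ge2); exists u; auto.
- by rewrite vf.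
- have vU : v \notin U by rewrite -(memW defW) (subsetP e2_in_W).
  by rewrite (negbTE (notin_ends_e1 vU)) vf.
Qed.

Lemma hall_matching_perfect : perfect_matching (F :\ e) M.
Proof.
apply: perfect_matchingP => [|v|v f f' fM f'M].
- rewrite subUset; apply/andP; split.
    by apply/subsetP=> _ /imsetP[u uA ->]; case: (hall_edgeP uA).
  by apply/subsetP=> f; apply: e12_in_F_minus_e.
- have [vU | vW] := boolP (v \in U).
    have [ve1 | ve1] := boolP (v \in ends e1).
      by exists e1; rewrite ?incidentE // !inE eqxx orbT.
    have vA : v \in A by rewrite inE ve1.
    exists (hall_edge v); first by rewrite inE imset_f.
    exact: joins_incident (hall_edgeP vA).2.
  have [ve2 | ve2] := boolP (v \in ends e2).
    by exists e2; rewrite ?incidentE // !inE eqxx !orbT.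
  have : v \in g @: A by rewrite image_g inE ve2 (memW defW).
  case/imsetP=> u uA ->; exists (hall_edge u); first by rewrite inE imset_f.
  by have [_] := hall_edgeP uA; rewrite joinsC; apply: joins_incident.
rewrite !incidentE => /(hall_matching_incident fM) + /(hall_matching_incident f'M).
case: ifP => [_ -> -> // | _]; case: ifP => [_ -> -> // | _].
move=> [u uA [-> vu]] [u' u'A [-> vu']]; congr hall_edge.
have [/setDP[uU _] /setDP[u'U _]] := (uA, u'A).
have gW w : w \in A -> g w \notin U.
  by move=> wA; have /andP[/setDP[+ _] _] := g_R wA; rewrite (memW defW).
case: vu vu' => -> [].
- by [].
- by move=> uE; move: (gW _ u'A); rewrite -uE uU.
- by move=> uE; move: (gW _ uA); rewrite uE u'U.
- by move/g_inj; apply.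
Qed.

End HallMatching.

Lemma deficient_set_exists : exists2 X : {set V}, X \subset A & #|neighbours R X| < #|X|.
Proof.
pose deficient (X : {set V}) := (X \subset A) && (#|neighbours R X| < #|X|).
have [X /andP[sXA defX] | hallA] := pickP deficient; first by exists X.
have [|g [g_inj g_R]] := @Hall_marriage _ R A.
  by move=> X sXA; rewrite leqNgt; apply/negP=> lt; move: (hallA X); rewrite /deficient sXA lt.
exfalso; apply: (no_perfect_matching_through_e1_e2 (hall_matching_perfect g_inj g_R));
  by rewrite !inE eqxx ?orbT.
Qed.

Section MatchingThroughE1.
Variable M : {set E}.
Hypotheses (pmM : perfect_matching F M) (e1M : e1 \in M).

Local Notation mate := (mate src dst M e).
Local Notation medge := (matched_edge src dst M e).

Lemma ends_matched_edge v : v \in ends (medge v).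
Proof. by rewrite -incidentE; case: (matched_edgeP e pmM v). Qed.

Lemma mate_side v : medge v != e1 -> medge v != e2 -> (mate v \in U) = (v \notin U).
Proof.
move=> n1 n2.
have := joins_crosses H_crosses (matched_edge_in_F e pmM v) n1 n2 (mate_joins e pmM v).
by case: (v \in U); case: (mate v \in U).
Qed.

Lemma e2_in_M : e2 \in M.
Proof.
apply: contraT => e2M.
have sub : mate @: W \subset A.
  apply/subsetP=> _ /imsetP[w wW ->].
  have n1 : medge w != e1.
    apply: contraTneq wW => me1; rewrite (memW defW) negbK (subsetP e1_in_U) // -me1.
    exact: ends_matched_edge.
  have n2 : medge w != e2 by apply: contraNneq e2M => <-; case: (matched_edgeP e pmM w).
  rewrite inE (mate_side n1 n2) -(memW defW) wW andbT.
  apply: contra n1 => me1.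
  by rewrite -(matched_edge_mate e pmM w) (matched_edge_ends e pmM e1M me1).
have := subset_leq_card sub; rewrite card_imset; last exact: can_inj (mateK loopless_G e pmM).
by have := card_A; rewrite card_U_W; lia.
Qed.

Lemma mate_A_in_B u : u \in A -> mate u \in B.
Proof.
case/setDP=> uU ue1.
have n1 : medge u != e1 by apply: contraNneq ue1 => <-; apply: ends_matched_edge.
have n2 : medge u != e2.
  by apply: contraNneq (notin_ends_e2 uU) => <-; apply: ends_matched_edge.
rewrite inE (memW defW) (mate_side n1 n2) uU andbT.
apply: contra n2 => me2.
by rewrite -(matched_edge_mate e pmM u) (matched_edge_ends e pmM e2_in_M me2).
Qed.

Section DeficientSet.
Variable X : {set V}.
Hypotheses (sXA : X \subset A) (deficient : #|neighbours R X| < #|X|).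

Lemma mate_in_neighbours u : u \in X -> medge u != e -> mate u \in neighbours R X.
Proof.
move=> uX ne; rewrite inE; apply/exists_inP; exists u => //.
rewrite /R mate_A_in_B ?(subsetP sXA) //=; apply/exists_inP; exists (medge u).
  by rewrite !inE ne (matched_edge_in_F e pmM).
exact: (mate_joins e pmM).
Qed.

Lemma deficiency_witness : exists u0, [/\ u0 \in X, medge u0 = e,
  mate u0 \notin neighbours R X & #|X| = #|neighbours R X| + 1].
Proof.
have card_mate Y : #|mate @: Y| = #|Y| := card_imset _ (can_inj (mateK loopless_G e pmM)).
have [u0 u0X u0e] : exists2 u0, u0 \in X & medge u0 = e.
  case: (boolP [exists u in X, medge u == e]) => [/exists_inP[u uX /eqP] | noe]; first by exists u.
  exfalso; move: deficient; rewrite ltnNge -(card_mate X); apply/negP/negPn.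
  apply/subset_leq_card/subsetP=> _ /imsetP[u uX ->]; apply: mate_in_neighbours => //.
  by apply: contraNneq noe => ue; apply/exists_inP; exists u; rewrite ?ue.
have sub : mate @: X \subset mate u0 |: neighbours R X.
  apply/subsetP=> _ /imsetP[u uX ->]; rewrite in_setU1.
  have [ue | ne] := eqVneq (medge u) e; last by rewrite mate_in_neighbours ?orbT.
  have [<- | u0_mate] := same_matched_edge pmM (etrans ue (esym u0e)); first by rewrite eqxx.
  have /setDP[u0U _] := subsetP sXA u0 u0X.
  have /setDP[] := mate_A_in_B (subsetP sXA u uX).
  by rewrite -u0_mate (memW defW) u0U.
have w0N : mate u0 \notin neighbours R X.
  apply: contraTN deficient => w0N; rewrite -leqNgt -(card_mate X); apply: subset_leq_card.
  by apply: subset_trans sub _; rewrite subUset sub1set w0N subxx.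
exists u0; split=> //; have := subset_leq_card sub; rewrite card_mate cardsU1 w0N add1n; lia.
Qed.

Lemma edges_between_deficient u0 : u0 \in X -> medge u0 = e ->
  mate u0 \notin neighbours R X ->
  edges_between src dst F X (W :\: (neighbours R X :|: ends e2)) = [set e].
Proof.
move=> u0X u0e w0N.
have only_e f x y : f \in F -> joins f x y -> x \in X ->
    y \in W :\: (neighbours R X :|: ends e2) -> f = e.
  move=> fF J xX /setDP[yW]; rewrite in_setU negb_or => /andP[yN ye2].
  apply/eqP; apply: contraNT yN => nfe; rewrite inE; apply/exists_inP; exists x => //.
  by rewrite /R inE ye2 yW; apply/exists_inP; exists f; rewrite // !inE nfe fF.
apply/eqP; rewrite eqEsubset sub1set; apply/andP; split.
  apply/subsetP=> f /setIdP[fF /orP[]/andP[xX yB2]]; apply/set1P.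
    by apply: (only_e _ _ _ fF _ xX yB2); rewrite /joins !eqxx.
  by apply: (only_e _ _ _ fF _ yB2 xX); rewrite /joins !eqxx orbT.
have /setDP[eF _] := proj1 e_removable_H.
have w0B2 : mate u0 \in W :\: (neighbours R X :|: ends e2).
  have /setDP[w0W w0e2] := mate_A_in_B (subsetP sXA u0 u0X).
  by rewrite inE in_setU negb_or w0N w0e2 w0W.
have J := mate_joins e pmM u0; rewrite u0e in J.
by apply/setIdP; split=> //; case/joinsP: J => -[-> ->]; rewrite u0X w0B2 ?orbT.
Qed.

End DeficientSet.
End MatchingThroughE1.

Lemma partition_exists : exists A1 A2 B1 B2 : {set V},
  A1 :|: A2 = U /\ [disjoint A1 & A2] /\ B1 :|: B2 = W /\ [disjoint B1 & B2] /\
  #|B1| = #|A1| + 1 /\ #|A2| = #|B2| + 1 /\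
  edges_in src dst F A2 = [set e1] /\ edges_in src dst F B1 = [set e2] /\
  edges_between src dst F A1 B2 = [set e].
Proof.
have [X sXA deficient] := deficient_set_exists.
have [M pmM e1M] := perfect_matching_through_e1.
have [u0 [u0X u0e w0N cardX]] := deficiency_witness pmM e1M sXA deficient.
set N := neighbours R X.
have sNB : N \subset B by apply/subsetP=> w; rewrite inE => /exists_inP[x _ /andP[]].
have sXU : X \subset U := subset_trans sXA (subsetDl _ _).
have sB1W : N :|: ends e2 \subset W by rewrite subUset e2_in_W (subset_trans sNB (subsetDl _ _)).
have cardB1 : #|N :|: ends e2| = #|X| + 1.
  have /disjoint_setI0 dNe2 : [disjoint N & ends e2].
    by rewrite disjoints_subset (subset_trans sNB) // /B setDE subsetIr.
  by rewrite cardsU dNe2 cards0 subn0 (card_ends _ loopless_G) cardX -addnA.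
exists X, (U :\: X), (N :|: ends e2), (W :\: (N :|: ends e2)).
split; first exact: setUD_sub.
split; first exact: disjoint_setD.
split; first exact: setUD_sub.
split; first exact: disjoint_setD.
split; first exact: cardB1.
split; first by rewrite !cardsDS // cardB1 card_U_W; have := subset_leq_card sB1W; lia.
split.
  apply: (edges_in_side defW H_crosses e1_in_F _ (subsetDl _ _) e2_in_W).
  apply/subsetP=> v ve1; rewrite inE (subsetP e1_in_U) // andbT.
  by apply: contraL ve1 => /(subsetP sXA) /setDP[].
split; last exact: (edges_between_deficient pmM e1M sXA u0X u0e w0N).
have defU : U = ~: W by rewrite defW setCK.
exact: (edges_in_side defU (crosses_swap defW H_crosses) e2_in_F (subsetUr _ _) sB1W e1_in_U).
Qed.

End Existence.

Theorem mainTheorem6 (V E : finType) (src dst : E -> V)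
  (F : {set E}) (e1 e2 e : E) (U W : {set V}) :
  loopless src dst ->
  brick src dst F ->
  removable_doubleton src dst F e1 e2 ->
  (* (U,W) is the bipartition of H = G - {e1,e2} *)
  W = ~: U ->
  (forall f, f \in F :\: [set e1; e2] -> (src f \in U) != (dst f \in U)) ->
  src e1 \in U -> dst e1 \in U -> src e2 \in W -> dst e2 \in W ->
  (* e is of type I *)
  e \notin [set e1; e2] ->
  nonremovable src dst F e ->
  removable src dst (F :\: [set e1; e2]) e ->
  (exists A1 A2 B1 B2 : {set V},
     (A1 :|: A2 = U /\ [disjoint A1 & A2] /\ B1 :|: B2 = W /\ [disjoint B1 & B2] /\
      #|B1| = #|A1| + 1 /\ #|A2| = #|B2| + 1 /\
      edges_in src dst F A2 = [set e1] /\ edges_in src dst F B1 = [set e2] /\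
      edges_between src dst F A1 B2 = [set e])) /\
  (forall A1 A2 B1 B2 : {set V},
     A1 :|: A2 = U -> [disjoint A1 & A2] -> B1 :|: B2 = W -> [disjoint B1 & B2] ->
     #|B1| = #|A1| + 1 -> #|A2| = #|B2| + 1 ->
     edges_in src dst F A2 = [set e1] -> edges_in src dst F B1 = [set e2] ->
     edges_between src dst F A1 B2 = [set e] ->
     barrier src dst (F :\ e) B1 /\ barrier src dst (F :\ e) A2).
Proof.
move=> loopless_G brick_G doubleton defW H_crosses se1 de1 se2 de2 e_neq_e12 e_nonrem e_rem.
have e1_in_U : ends src dst e1 \subset U by rewrite subUset !sub1set se1 de1.
have e2_in_W : ends src dst e2 \subset W by rewrite subUset !sub1set se2 de2.
split; first exact: (partition_exists loopless_G brick_G doubleton defW H_crosses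
  e1_in_U e2_in_W e_neq_e12 e_nonrem e_rem).
move=> A1 A2 B1 B2 defU dA defW12 dB cardB1 cardA2 inA2 inB1 betweenA1B2.
have [M pmM] := matching_covered_perfect_matching (proj2 e_rem).
have sHF : F :\: [set e1; e2] :\ e \subset F :\ e by apply/setSD/subsetDl.
exact: (barriers_of_partition loopless_G defW H_crosses defU dA defW12 dB cardB1 cardA2
  inA2 inB1 betweenA1B2 (perfect_matching_subset sHF pmM)).
Qed.
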